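(* Let $\mathcal{X}=\{1,\dots,n\}$ with $n\ge 2$, let $\pi$ be a strictly positive probability distribution on $\mathcal{X}$, let $P$ be a $\pi$-reversible transition matrix, and fix $\alpha\in(0,1)$. With $g$ and $A_\alpha(S)$ as defined below, and identifying a singleton $\{x\}$ with $x$, $$\operatorname*{argmin}_{S\neq\mathcal{X},\,|S|=1}\|A_\alpha(S)-\Pi\|_{F,\pi}^2=\operatorname*{argmax}_{S\neq\mathcal{X},\,|S|=1}g(S)=\operatorname*{argmax}_{x\in\mathcal{X}}\frac{1-P(x,x)}{1-\pi(x)}.$$
   Context: $S'=\mathcal{X}\setminus S$; $g(S)=\frac{1}{\pi(S)\pi(S')}\sum_{x\in S,\,y\in S'}\pi(x)P(x,y)$. $\pi$-reversible means $\pi(x)P(x,y)=\pi(y)P(y,x)$. For $S\neq\emptyset,\mathcal{X}$, $A_\alpha(S)=\alpha P+(1-\alpha)G_S$ where $G_S(x,y)=\pi(y)/\pi(\mathcal{O}(x))$ if $y\in\mathcal{O}(x)$ and $0$ otherwise, $\mathcal{O}(x)\in\{S,S'\}$ the block containing $x$. $\Pi$ is the matrix with every row equal to $\pi$; $\|M\|_{F,\pi}^2=\operatorname{Tr}(M^*M)$ with $M^*(x,y)=\pi(y)M(y,x)/\pi(x)$. *)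

From mathcomp Require Import all_boot all_order all_algebra.
Set Implicit Arguments. Unset Strict Implicit. Unset Printing Implicit Defensive.
Import Order.TTheory GRing.Theory Num.Theory.
Local Open Scope ring_scope.

Section Defs.
Variables (R : realFieldType) (n : nat).

Definition piS (pi : 'I_n -> R) (S : {set 'I_n}) : R := \sum_(x in S) pi x.

Definition gS (pi : 'I_n -> R) (P : 'M[R]_n) (S : {set 'I_n}) : R :=
  (piS pi S * piS pi (~: S))^-1 *
  \sum_(x in S) \sum_(y in ~: S) pi x * P x y.

Definition blockOf (S : {set 'I_n}) (x : 'I_n) : {set 'I_n} :=
  if x \in S then S else ~: S.

Definition GS (pi : 'I_n -> R) (S : {set 'I_n}) : 'M[R]_n :=
  \matrix_(x, y) (if y \in blockOf S x then pi y / piS pi (blockOf S x) else 0).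

Definition Aalpha (pi : 'I_n -> R) (P : 'M[R]_n) (alpha : R) (S : {set 'I_n})
  : 'M[R]_n := alpha *: P + (1 - alpha) *: GS pi S.

Definition PiM (pi : 'I_n -> R) : 'M[R]_n := \matrix_(x, y) pi y.

Definition adjpi (pi : 'I_n -> R) (M : 'M[R]_n) : 'M[R]_n :=
  \matrix_(x, y) (pi y * M y x / pi x).

Definition frob2 (pi : 'I_n -> R) (M : 'M[R]_n) : R := \tr (adjpi pi M *m M).

End Defs.

Definition is_argmin (R : realFieldType) (T : finType) (D : pred T) (f : T -> R)
  (x : T) : bool := D x && [forall y, D y ==> (f x <= f y)].
Definition is_argmax (R : realFieldType) (T : finType) (D : pred T) (f : T -> R)
  (x : T) : bool := D x && [forall y, D y ==> (f y <= f x)].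

(* For the pi-weighted Frobenius inner product,
     A_alpha(S) - Pi = alpha (P - Pi) + (1 - alpha) (G_S - Pi).
   When both blocks carry positive mass, G_S - Pi is the orthogonal projection
   onto the centred indicator of S, so ||G_S - Pi||^2 = 1, and by reversibility
   its inner product with P - Pi is 1 - g(S).  Hence
     ||A_alpha(S) - Pi||^2
       = alpha^2 ||P - Pi||^2 + 2 alpha (1 - alpha) (1 - g(S)) + (1 - alpha)^2
   is strictly decreasing in g(S), and g({x}) = (1 - P(x,x)) / (1 - pi(x)). *)

From mathcomp Require Import all_boot all_order all_algebra.
From mathcomp Require Import ring.
Set Implicit Arguments.
Unset Strict Implicit.
Unset Printing Implicit Defensive.
Import Order.TTheory GRing.Theory Num.Theory.
Local Open Scope ring_scope.

Lemma is_argmin_argmax (R : realFieldType) (T : finType) (D : pred T)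
    (f g : T -> R) :
  {in D &, forall x y, (f x <= f y) = (g y <= g x)} ->
  is_argmin D f =1 is_argmax D g.
Proof.
move=> fg x; rewrite /is_argmin /is_argmax; case: (boolP (D x)) => //= Dx.
by apply: eq_forallb => y; case: (boolP (D y)) => //= Dy; rewrite fg.
Qed.

Lemma is_argmax_codom (R : realFieldType) (T U : finType) (D : pred U)
    (h : T -> U) (g : U -> R) (f : T -> R) :
  (forall u, D u = (u \in codom h)) -> (forall x, g (h x) = f x) ->
  [set u | is_argmax D g u] = [set h x | x in [set x | is_argmax predT f x]].
Proof.
move=> Dh gh; apply/setP => u; rewrite !inE /is_argmax /=; apply/idP/imsetP.
  case/andP; rewrite Dh => /codomP[x ->] /forallP max_x.
  exists x => //; rewrite inE; apply/forallP => y.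
  by have := max_x (h y); rewrite Dh codom_f !gh.
case=> x; rewrite inE => /forallP max_x ->; rewrite Dh codom_f /=.
by apply/forallP => v; apply/implyP; rewrite Dh => /codomP[y ->]; rewrite !gh.
Qed.

Section ReversibleChain.
Variables (R : realFieldType) (n : nat) (pi : 'I_n -> R) (P : 'M[R]_n).
Hypothesis pi_gt0 : forall x, 0 < pi x.
Hypothesis pi_sum1 : \sum_x pi x = 1.
Hypothesis P_row1 : forall x, \sum_y P x y = 1.
Hypothesis P_rev : forall x y, pi x * P x y = pi y * P y x.

Lemma sumr_setC (S : {set 'I_n}) (F : 'I_n -> R) :
  \sum_(j in ~: S) F j = \sum_j F j - \sum_(j in S) F j.
Proof.
rewrite [X in _ = X - _](bigID (mem S)) /= addrC addrK.
by apply: eq_bigl => j; rewrite inE.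
Qed.

Lemma sum_blockOf (S : {set 'I_n}) (F : {set 'I_n} -> 'I_n -> R) :
  \sum_j F (blockOf S j) j = \sum_(j in S) F S j + \sum_(j in ~: S) F (~: S) j.
Proof.
rewrite (bigID (mem S)) /=; congr (_ + _); apply: eq_big => j; rewrite ?inE //.
- by move=> jS; rewrite /blockOf jS.
- by move=> /negbTE jNS; rewrite /blockOf jNS.
Qed.

Lemma piS_setC (S : {set 'I_n}) : piS pi (~: S) = 1 - piS pi S.
Proof. by rewrite /piS sumr_setC pi_sum1. Qed.

Lemma piS_set1 x : piS pi [set x] = pi x.
Proof. exact: big_set1. Qed.

Lemma piS_setC1_gt0 x : (1 < n)%N -> 0 < piS pi (~: [set x]).
Proof.
move=> n_gt1; have : (0 < #|~: [set x]|)%N.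
  by rewrite cardsC1 card_ord -subn1 subn_gt0.
case/card_gt0P => y yNx; rewrite /piS (bigD1 y) //= ltr_pwDl //.
by apply: sumr_ge0 => z _; apply: ltW.
Qed.

Definition flow (S : {set 'I_n}) : R :=
  \sum_(x in S) \sum_(y in ~: S) pi x * P x y.

Lemma flow_setC (S : {set 'I_n}) : flow (~: S) = flow S.
Proof.
rewrite /flow setCK exchange_big /=.
by apply: eq_bigr => y _; apply: eq_bigr => x _; rewrite P_rev.
Qed.

Lemma sum_pi_P_within (B : {set 'I_n}) :
  \sum_(x in B) pi x * \sum_(y in B) P x y = piS pi B - flow B.
Proof.
rewrite /flow /piS -sumrB; apply: eq_bigr => x _.
by rewrite -mulr_sumr sumr_setC P_row1; ring.
Qed.

Definition dotpi (M N : 'M[R]_n) : R := \tr (adjpi pi M *m N).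

Lemma frob2E (M : 'M[R]_n) : frob2 pi M = dotpi M M.
Proof. by []. Qed.

Lemma dotpiE (M N : 'M[R]_n) :
  dotpi M N = \sum_i \sum_j pi j / pi i * M j i * N j i.
Proof.
apply: eq_bigr => i _; rewrite mxE; apply: eq_bigr => j _; rewrite mxE; ring.
Qed.

Lemma frob2_combine (a b : R) (X Y : 'M[R]_n) :
  frob2 pi (a *: X + b *: Y) =
  a ^+ 2 * frob2 pi X + 2 * a * b * dotpi X Y + b ^+ 2 * frob2 pi Y.
Proof.
rewrite !frob2E !dotpiE !mulr_sumr -!big_split /=; apply: eq_bigr => i _.
rewrite !mulr_sumr -!big_split /=; apply: eq_bigr => j _; rewrite !mxE; ring.
Qed.

Lemma Aalpha_sub_Pi (alpha : R) (S : {set 'I_n}) :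
  Aalpha pi P alpha S - PiM pi =
  alpha *: (P - PiM pi) + (1 - alpha) *: (GS pi S - PiM pi).
Proof. by apply/matrixP => i j; rewrite !mxE; ring. Qed.

Definition centered_block (B : {set 'I_n}) (i : 'I_n) : R :=
  (i \in B)%:R / piS pi B - 1.

Lemma GS_sub_PiE (S : {set 'I_n}) j i :
  (GS pi S - PiM pi) j i = pi i * centered_block (blockOf S j) i.
Proof.
by rewrite !mxE /centered_block; case: (i \in blockOf S j) => /=; ring.
Qed.

Lemma sum_indicator (B : {set 'I_n}) (F : 'I_n -> R) :
  \sum_i F i * (i \in B)%:R = \sum_(i in B) F i.
Proof.
by rewrite [RHS]big_mkcond; apply: eq_bigr => i _; case: (i \in B) => /=; ring.
Qed.

Lemma sum_pi_centered_block_sqr (B : {set 'I_n}) : piS pi B != 0 ->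
  \sum_i pi i * centered_block B i * centered_block B i = (piS pi B)^-1 - 1.
Proof.
move=> B_neq0; set p := piS pi B.
transitivity (\sum_i ((p^-1 * p^-1 - 2 * p^-1) * (pi i * (i \in B)%:R) + pi i)).
  by apply: eq_bigr => i _; rewrite /centered_block; case: (i \in B) => /=; ring.
rewrite big_split /= -mulr_sumr pi_sum1 sum_indicator.
by rewrite -[\sum_(i in B) pi i]/p; field.
Qed.

Lemma sum_centered_block_row (B : {set 'I_n}) j : piS pi B != 0 ->
  \sum_i (P j i - pi i) * centered_block B i
  = (\sum_(i in B) P j i) / piS pi B - 1.
Proof.
move=> B_neq0; set p := piS pi B.
transitivity (\sum_i (p^-1 * (P j i * (i \in B)%:R) - p^-1 * (pi i * (i \in B)%:R)
    - P j i + pi i)).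
  by apply: eq_bigr => i _; rewrite /centered_block; case: (i \in B) => /=; ring.
rewrite !big_split /= !sumrN -!mulr_sumr !sum_indicator P_row1 pi_sum1.
by rewrite -[\sum_(i in B) pi i]/p; field.
Qed.

Lemma sum_pi_within_ratio (B : {set 'I_n}) : piS pi B != 0 ->
  \sum_(j in B) pi j * ((\sum_(i in B) P j i) / piS pi B - 1)
  = (piS pi B - flow B) / piS pi B - piS pi B.
Proof.
move=> B_neq0; rewrite -sum_pi_P_within mulr_suml {3}/piS -sumrB.
by apply: eq_bigr => j _; ring.
Qed.

Lemma dotpi_GS_sub_Pi (X : 'M[R]_n) (S : {set 'I_n}) :
  dotpi X (GS pi S - PiM pi) =
  \sum_j pi j * \sum_i X j i * centered_block (blockOf S j) i.
Proof.
rewrite dotpiE exchange_big /=; apply: eq_bigr => j _; rewrite mulr_sumr.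
apply: eq_bigr => i _; rewrite GS_sub_PiE.
by field; rewrite gt_eqF.
Qed.

Section TwoBlocks.
Variable S : {set 'I_n}.
Hypotheses (S_neq0 : piS pi S != 0) (SC_neq0 : piS pi (~: S) != 0).

Lemma piS_blockOf_neq0 j : piS pi (blockOf S j) != 0.
Proof. by rewrite /blockOf; case: (j \in S). Qed.

Lemma frob2_GS_sub_Pi : frob2 pi (GS pi S - PiM pi) = 1.
Proof.
rewrite frob2E dotpi_GS_sub_Pi.
transitivity (\sum_j pi j * ((piS pi (blockOf S j))^-1 - 1)).
  apply: eq_bigr => j _; rewrite -sum_pi_centered_block_sqr ?piS_blockOf_neq0 //.
  by congr (_ * _); apply: eq_bigr => i _; rewrite GS_sub_PiE.
rewrite (sum_blockOf S (fun B j => pi j * ((piS pi B)^-1 - 1))) -!mulr_suml.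
rewrite -[\sum_(j in S) pi j]/(piS pi S) -[\sum_(j in ~: S) pi j]/(piS pi (~: S)).
by rewrite piS_setC; field; rewrite S_neq0 -piS_setC SC_neq0.
Qed.

Lemma dotpi_P_GS : dotpi (P - PiM pi) (GS pi S - PiM pi) = 1 - gS pi P S.
Proof.
rewrite dotpi_GS_sub_Pi.
transitivity (\sum_j pi j * ((\sum_(i in blockOf S j) P j i)
                             / piS pi (blockOf S j) - 1)).
  apply: eq_bigr => j _; rewrite -sum_centered_block_row ?piS_blockOf_neq0 //.
  by congr (_ * _); apply: eq_bigr => i _; rewrite !mxE.
rewrite (sum_blockOf S (fun B j => pi j * ((\sum_(i in B) P j i) / piS pi B - 1))).
rewrite !sum_pi_within_ratio // flow_setC /gS -/(flow S) piS_setC.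
by field; rewrite S_neq0 -piS_setC SC_neq0.
Qed.

Lemma frob2_Aalpha_sub_Pi (alpha : R) :
  frob2 pi (Aalpha pi P alpha S - PiM pi) =
  alpha ^+ 2 * frob2 pi (P - PiM pi)
  + 2 * alpha * (1 - alpha) * (1 - gS pi P S) + (1 - alpha) ^+ 2.
Proof. by rewrite Aalpha_sub_Pi frob2_combine dotpi_P_GS frob2_GS_sub_Pi mulr1. Qed.

End TwoBlocks.

Lemma frob2_Aalpha_le (alpha : R) (S T : {set 'I_n}) : 0 < alpha < 1 ->
  piS pi S != 0 -> piS pi (~: S) != 0 -> piS pi T != 0 -> piS pi (~: T) != 0 ->
  (frob2 pi (Aalpha pi P alpha S - PiM pi)
     <= frob2 pi (Aalpha pi P alpha T - PiM pi))
  = (gS pi P T <= gS pi P S).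
Proof.
move=> /andP[alpha_gt0 alpha_lt1] *; rewrite !frob2_Aalpha_sub_Pi //.
rewrite lerD2r lerD2l ler_pM2l ?lerD2l ?lerN2 //.
by rewrite !mulr_gt0 // subr_gt0.
Qed.

Lemma gS_set1 x : (1 < n)%N -> gS pi P [set x] = (1 - P x x) / (1 - pi x).
Proof.
move=> n_gt1; have := piS_setC1_gt0 x n_gt1.
rewrite /gS piS_setC !piS_set1 big_set1 -mulr_sumr sumr_setC P_row1 big_set1.
by move=> pi_lt1; field; rewrite !gt_eqF ?pi_gt0.
Qed.

End ReversibleChain.

Theorem corollary4p9 (R : realFieldType) (n : nat) (pi : 'I_n -> R)
  (P : 'M[R]_n) (alpha : R) :
  (2 <= n)%N ->
  (forall x, 0 < pi x) -> \sum_x pi x = 1 ->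
  (forall x y, 0 <= P x y) -> (forall x, \sum_y P x y = 1) ->
  (forall x y, pi x * P x y = pi y * P y x) ->
  0 < alpha < 1 ->
  let cand := fun S : {set 'I_n} => (S != [set: 'I_n]) && (#|S| == 1%N) in
  [set S | is_argmin cand (fun S => frob2 pi (Aalpha pi P alpha S - PiM pi)) S]
    = [set S | is_argmax cand (gS pi P) S]
  /\
  [set S | is_argmax cand (gS pi P) S]
    = [set [set x] | x in [set x | is_argmax predT
                         (fun x : 'I_n => (1 - P x x) / (1 - pi x)) x]].
Proof.
move=> n_gt1 pi_gt0 pi_sum1 _ P_row1 P_rev alpha01 cand.
have cand_set1 S : cand S = (S \in codom set1).
  apply/andP/codomP => [[_ /cards1P[x ->]] | [x ->]]; first by exists x.
  split; rewrite ?cards1 //; apply: contraTneq n_gt1 => x_all.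
  by rewrite -leqNgt -(card_ord n) -cardsT -x_all cards1.
have piS_neq0 S : cand S -> piS pi S != 0 /\ piS pi (~: S) != 0.
  rewrite cand_set1 => /codomP[x ->].
  by rewrite piS_set1 !gt_eqF ?pi_gt0 ?piS_setC1_gt0.
split; last first.
  apply: is_argmax_codom cand_set1 _ => x.
  exact: gS_set1 pi_gt0 pi_sum1 P_row1 x n_gt1.
apply/setP => S; rewrite !inE; apply: is_argmin_argmax => T U.
move=> /piS_neq0[T_neq0 TC_neq0] /piS_neq0[U_neq0 UC_neq0].
exact: frob2_Aalpha_le.
Qed.
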